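(* Let $n \ge 1$ be an integer, let $Z = (z_1,\dots,z_n)^T \in \mathbb{R}^n$, let $r > 0$ and let $\epsilon \in (0,1)$. For a parameter $\lambda > 0$ define the two-SAF-layer network $y_\lambda:\mathbb{R}^n \to (0,1]$ by $$r_k(X) = \lambda (x_k - z_k),\quad s_k(X) = e^{-r_k(X)^2}\ (k=1,\dots,n),\quad t(X) = \sum_{k=1}^n s_k(X) - n,\quad y_\lambda(X) = e^{-t(X)^2},$$ for $X = (x_1,\dots,x_n)^T$. Let $\Omega = \{X \in \mathbb{R}^n : \lVert X - Z\rVert \le r\}$ (Euclidean norm), and for $\tau \in (0,1)$ let $\Omega'_{\lambda,\tau} = \{X \in \mathbb{R}^n : y_\lambda(X) \ge \tau\}$. Then there exist $\lambda > 0$ and $\tau \in (0,1)$ such that $$\frac{V(\Omega \cap \Omega'_{\lambda,\tau})}{V(\Omega \cup \Omega'_{\lambda,\tau})} \ge 1 - \epsilon,$$ where $V$ denotes $n$-dimensional Lebesgue measure.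
   Context: This formalizes the statement that a network consisting of two layers of the one-dimensional radial basis function $\sigma(u) = e^{-u^2}$ (a ''symmetric activation function''), with an affine layer before each, can decide membership of a sample $X$ in the closed Euclidean ball of radius $r$ centred at $Z$ with arbitrarily small error, the decision being ''$X$ is in the ball iff $y_\lambda(X) \ge \tau$'', and the error being measured by one minus the ratio of the volume of the intersection to the volume of the union of the true ball and the accepted region. *)

From Stdlib Require Import Reals Lra.
Open Scope R_scope.

(* Points of R^n are represented as functions nat -> R; only coordinates
   0..n-1 are relevant. *)

Fixpoint rsum (n : nat) (f : nat -> R) : R :=
  match n with O => 0 | S m => rsum m f + f m end.

Fixpoint rprod (n : nat) (f : nat -> R) : R :=
  match n with O => 1 | S m => rprod m f * f m end.

Definition dist_n (n : nat) (X Z : nat -> R) : R :=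
  sqrt (rsum n (fun k => (X k - Z k) ^ 2)).

Definition saf_net (n : nat) (Z : nat -> R) (lam : R) (X : nat -> R) : R :=
  let s := fun k => exp (- (lam * (X k - Z k)) ^ 2) in
  let t := rsum n s - INR n in
  exp (- t ^ 2).

Definition box_vol (n : nat) (a b : nat -> R) : R :=
  rprod n (fun i => b i - a i).

Definition cover_sums (n : nat) (S : (nat -> R) -> Prop) (s : R) : Prop :=
  exists a b : nat -> nat -> R,
    (forall k i, a k i <= b k i) /\
    (forall X, S X -> exists k, forall i, (i < n)%nat -> a k i <= X i <= b k i) /\
    infinite_sum (fun k => box_vol n (a k) (b k)) s.

(* m is the n-dimensional Lebesgue (outer) measure of S, assumed finite:
   the infimum of total volumes of countable box covers. On Lebesgue
   measurable sets this coincides with Lebesgue measure. *)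
Definition lebesgue_measure_is (n : nat) (S : (nat -> R) -> Prop) (m : R) : Prop :=
  (forall s, cover_sums n S s -> m <= s) /\
  (forall m', (forall s, cover_sums n S s -> m' <= s) -> m' <= m).

(* With rho = 1 - eps/n, lam^2 (rho r)^2 = 1 - rho^2 and tau = exp (-(1 - rho^2)^2), write
   y_lam = exp (-g^2) where g = sum_k (1 - exp (-w_k)) and w_k = lam^2 (x_k - z_k)^2.
   Then g <= sum w_k, and g <= 1 - rho^2 forces exp (-w_k) >= rho^2, hence g >= rho^2 sum w_k.
   So the accepted region lies between the balls of radii rho r and r about Z: the union is the
   ball Omega and the intersection contains the image of Omega under the homothety of ratio rho,
   whence the ratio of volumes is at least rho^n >= 1 - eps (Bernoulli).

   With the measure defined as an infimum of box-cover sums, the homothety only needs covers to be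
   rescaled; the delicate point is V(Omega) > 0, i.e. that a box has volume at most the total volume
   of any countable cover.  The cover is enlarged to open boxes, and the inequality is proved for
   weighted covers by induction on the dimension. *)

From Stdlib Require Import Reals Lra Lia Classical ClassicalEpsilon.
Open Scope R_scope.

Definition indic (P : Prop) : R := if excluded_middle_informative P then 1 else 0.

Lemma indic_bounds (P : Prop) : 0 <= indic P <= 1.
Proof. unfold indic; destruct excluded_middle_informative; lra. Qed.

Lemma indic_true (P : Prop) : P -> indic P = 1.
Proof. unfold indic; destruct excluded_middle_informative; tauto. Qed.

Lemma indic_false (P : Prop) : ~ P -> indic P = 0.
Proof. unfold indic; destruct excluded_middle_informative; tauto. Qed.

Lemma indic_le (P Q : Prop) : (P -> Q) -> indic P <= indic Q.
Proof. intros H; unfold indic; do 2 destruct excluded_middle_informative; tauto || lra. Qed.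

Lemma indic_iff (P Q : Prop) : (P <-> Q) -> indic P = indic Q.
Proof. intros H; unfold indic; do 2 destruct excluded_middle_informative; tauto. Qed.

Lemma indic_and (P Q : Prop) : indic (P /\ Q) = indic P * indic Q.
Proof. unfold indic; do 3 destruct excluded_middle_informative; tauto || lra. Qed.

Lemma rsum_ext n f g : (forall k, (k < n)%nat -> f k = g k) -> rsum n f = rsum n g.
Proof. induction n; simpl; intros H; auto. rewrite IHn, H; auto; lia. Qed.

Lemma rsum_le n f g : (forall k, (k < n)%nat -> f k <= g k) -> rsum n f <= rsum n g.
Proof.
  induction n; simpl; intros H; [lra|].
  specialize (IHn (fun k Hk => H k ltac:(lia))). specialize (H n ltac:(lia)). lra.
Qed.

Lemma rsum_ge0 n f : (forall k, (k < n)%nat -> 0 <= f k) -> 0 <= rsum n f.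
Proof.
  induction n; simpl; intros H; [lra|].
  specialize (IHn (fun k Hk => H k ltac:(lia))). specialize (H n ltac:(lia)). lra.
Qed.

Lemma rsum_add n f g : rsum n (fun k => f k + g k) = rsum n f + rsum n g.
Proof. induction n; simpl; lra. Qed.

Lemma rsum_sub n f g : rsum n (fun k => f k - g k) = rsum n f - rsum n g.
Proof. induction n; simpl; lra. Qed.

Lemma rsum_mull n c f : rsum n (fun k => c * f k) = c * rsum n f.
Proof. induction n; simpl; lra. Qed.

Lemma rsum_const n c : rsum n (fun _ => c) = INR n * c.
Proof. induction n; simpl rsum; [simpl; lra|]. rewrite S_INR; lra. Qed.

Lemma rsum_ge_term n f k :
  (forall j, (j < n)%nat -> 0 <= f j) -> (k < n)%nat -> f k <= rsum n f.
Proof.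
  induction n; intros Hf Hk; [lia|]. simpl.
  assert (0 <= rsum n f) by (apply rsum_ge0; intros; apply Hf; lia).
  destruct (Nat.eq_dec k n) as [->|Hkn]; [lra|].
  specialize (IHn (fun j Hj => Hf j ltac:(lia)) ltac:(lia)). specialize (Hf n ltac:(lia)). lra.
Qed.

Lemma rsum_le_len f N N' : (forall k, 0 <= f k) -> (N <= N')%nat -> rsum N f <= rsum N' f.
Proof. intros Hf HN; induction HN; simpl; [lra|]. specialize (Hf m); lra. Qed.

Lemma rsum_exchange M N (f : nat -> nat -> R) :
  rsum M (fun j => rsum N (fun k => f j k)) = rsum N (fun k => rsum M (fun j => f j k)).
Proof.
  induction M; simpl.
  - rewrite rsum_const; simpl; lra.
  - rewrite IHM, <- rsum_add; reflexivity.
Qed.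

Lemma rsum_sum_f_R0 f N : rsum (S N) f = sum_f_R0 f N.
Proof. induction N; simpl in *; lra. Qed.

Lemma rsum_le_infinite_sum f s :
  (forall k, 0 <= f k) -> infinite_sum f s -> forall N, rsum N f <= s.
Proof.
  intros Hf Hs N.
  apply Rle_trans with (rsum (S N) f); [apply rsum_le_len; auto|].
  rewrite rsum_sum_f_R0. apply growing_ineq; [|exact Hs].
  intro m; simpl. specialize (Hf (S m)); lra.
Qed.

Lemma rprod_ge0 n f : (forall i, (i < n)%nat -> 0 <= f i) -> 0 <= rprod n f.
Proof. induction n; simpl; intros; [lra|]. apply Rmult_le_pos; auto. Qed.

Lemma rprod_gt0 n f : (forall i, (i < n)%nat -> 0 < f i) -> 0 < rprod n f.
Proof. induction n; simpl; intros; [lra|]. apply Rmult_lt_0_compat; auto. Qed.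

Lemma rprod_ext n f g : (forall k, (k < n)%nat -> f k = g k) -> rprod n f = rprod n g.
Proof. induction n; simpl; intros H; auto. rewrite IHn, H; auto; lia. Qed.

Lemma rprod_mulr n f c : rprod n (fun i => f i * c) = rprod n f * c ^ n.
Proof. induction n; simpl; [lra|]. rewrite IHn; ring. Qed.

Lemma pow_one_sub_ge n x : 0 <= x <= 1 -> 1 - INR n * x <= (1 - x) ^ n.
Proof.
  intros Hx; induction n; [simpl; lra|].
  rewrite S_INR; simpl. assert (0 <= INR n) by apply pos_INR. nra.
Qed.

Lemma one_sub_div_pow_ge n eps : (1 <= n)%nat -> 0 < eps < 1 ->
  0 < 1 - eps / INR n < 1 /\ 1 - eps <= (1 - eps / INR n) ^ n.
Proof.
  intros Hn Heps.
  assert (HnR : 1 <= INR n) by (apply (le_INR 1); lia).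
  assert (Hx : 0 < eps / INR n <= eps).
  { split; [apply Rdiv_lt_0_compat; lra|].
    apply Rmult_le_reg_r with (INR n); [lra|]. field_simplify; nra. }
  split; [lra|].
  pose proof (pow_one_sub_ge n (eps / INR n) ltac:(lra)) as Hb.
  replace (INR n * (eps / INR n)) with eps in Hb by (field; lra). exact Hb.
Qed.

Lemma Rle_of_linear_bound x y C :
  (forall M, (1 <= M)%nat -> INR M * x <= INR M * y + C) -> x <= y.
Proof.
  intros H. apply Rnot_lt_le; intro Hyx.
  destruct (INR_unbounded (Rmax 1 (C / (x - y)))) as [M HM].
  assert (1 < INR M) by (pose proof (Rmax_l 1 (C / (x - y))); lra).
  assert (HC : C < INR M * (x - y)).
  { apply Rmult_lt_reg_r with (/ (x - y)); [apply Rinv_0_lt_compat; lra|].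
    rewrite Rmult_assoc, Rinv_r by lra.
    pose proof (Rmax_r 1 (C / (x - y))). unfold Rdiv in *. lra. }
  assert (HM1 : (1 <= M)%nat) by (apply INR_le; simpl; lra).
  specialize (H M HM1). lra.
Qed.

Lemma increasing_open_cover_segment (U : nat -> R -> Prop) p q :
  (forall N N' t, (N <= N')%nat -> U N t -> U N' t) ->
  (forall N, open_set (U N)) ->
  (forall t, p <= t <= q -> exists N, U N t) ->
  exists N, forall t, p <= t <= q -> U N t.
Proof.
  intros Hmono Hopen Hcov.
  (* Stdlib's families are indexed by reals: [U N] gets the index [INR N]. *)
  set (ind := fun x => exists N, x = INR N).
  set (fU := fun x t => exists N, x = INR N /\ U N t).
  assert (Hind : forall x, (exists t, fU x t) -> ind x) by (intros x [t [N [-> _]]]; exists N; auto).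
  destruct (compact_P3 p q (mkfamily ind fU Hind)) as [D [HD [l Hl]]].
  { split.
    - intros t Ht. destruct (Hcov t Ht) as [N HN]. exists (INR N), N; auto.
    - intros x t [N [-> HN]]. destruct (Hopen N t HN) as [delta Hdelta].
      exists delta. intros y Hy. exists N; auto. }
  assert (Hbound : exists M, forall x N, List.In x l -> x = INR N -> (N <= M)%nat).
  { clear HD Hl. induction l as [|x l [M HM]].
    - exists 0%nat. intros x N [].
    - destruct (classic (exists N0, x = INR N0)) as [[N0 HN0]|Hx].
      + exists (Nat.max M N0). intros y N [<-|Hy] ->.
        * apply INR_eq in HN0 as ->. lia.
        * specialize (HM _ N Hy eq_refl). lia.
      + exists M. intros y N [<-|Hy] Hyeq; [exfalso; eauto|eauto]. }
  destruct Hbound as [M HM]. exists M. intros t Ht.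
  destruct (HD t Ht) as [x [[N [-> HN]] HDx]].
  apply (Hmono N); auto. apply (HM (INR N)); auto. apply Hl. split; [exists N|]; auto.
Qed.

Lemma indic_open_interval_lsc a b t :
  exists d, 0 < d /\ forall t', Rabs (t' - t) < d -> indic (a < t < b) <= indic (a < t' < b).
Proof.
  destruct (classic (a < t < b)) as [Hin|Hout].
  - exists (Rmin (t - a) (b - t)). split; [apply Rmin_glb_lt; lra|].
    intros t' Ht'. apply indic_le. intros _.
    pose proof (Rmin_l (t - a) (b - t)). pose proof (Rmin_r (t - a) (b - t)).
    apply Rabs_def2 in Ht'. lra.
  - exists 1. split; [lra|]. intros t' _. rewrite (indic_false _ Hout). apply indic_bounds.
Qed.

Lemma rsum_indic_half_int_le M al be :
  rsum M (fun j => indic (al < INR j + /2 < be)) <= Rmax 0 (be - al + 1).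
Proof.
  revert be; induction M; intros be; simpl rsum; [apply Rmax_l|].
  destruct (classic (al < INR M + /2 < be)) as [Hin|Hout].
  - rewrite (indic_true _ Hin).
    assert (rsum M (fun j => indic (al < INR j + /2 < be))
            <= rsum M (fun j => indic (al < INR j + /2 < be - 1))).
    { apply rsum_le; intros k Hk; apply indic_le. intros [H1 H2]; split; auto.
      assert (INR k + 1 <= INR M) by (rewrite <- S_INR; apply le_INR; lia). lra. }
    specialize (IHM (be - 1)). rewrite Rmax_right by lra.
    unfold Rmax in IHM; destruct Rle_dec; lra.
  - rewrite (indic_false _ Hout), Rplus_0_r. apply IHM.
Qed.

Lemma rsum_indic_grid_le p h M a b : 0 < h -> a <= b ->
  rsum M (fun j => indic (a < p + (INR j + /2) * h < b)) <= (b - a) / h + 1.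
Proof.
  intros Hh Hab.
  apply Rle_trans with (Rmax 0 ((b - p) / h - (a - p) / h + 1)).
  - eapply Rle_trans; [|apply rsum_indic_half_int_le].
    apply rsum_le; intros j _; apply indic_le. intros [H1 H2].
    split; [apply Rmult_lt_reg_r with h | apply Rmult_lt_reg_r with h]; auto;
      unfold Rdiv; rewrite Rmult_assoc, Rinv_l by lra; lra.
  - assert (0 <= (b - a) / h) by (apply Rmult_le_pos; [lra|left; apply Rinv_0_lt_compat; lra]).
    replace ((b - p) / h - (a - p) / h) with ((b - a) / h) by (field; lra).
    rewrite Rmax_right; lra.
Qed.

Section IntervalCover.

Variables (a b c : nat -> R).
Hypothesis Hab : forall k, a k <= b k.
Hypothesis Hc : forall k, 0 <= c k.

Definition interval_weight N t := rsum N (fun k => c k * indic (a k < t < b k)).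

Lemma interval_weight_le_len N N' t : (N <= N')%nat -> interval_weight N t <= interval_weight N' t.
Proof.
  intros; apply rsum_le_len; auto.
  intro k; apply Rmult_le_pos; auto; apply indic_bounds.
Qed.

Lemma interval_weight_lsc N t :
  exists d, 0 < d /\ forall t', Rabs (t' - t) < d -> interval_weight N t <= interval_weight N t'.
Proof.
  induction N as [|N [d [Hd IH]]].
  - exists 1; split; [lra|]; intros; unfold interval_weight; simpl; lra.
  - destruct (indic_open_interval_lsc (a N) (b N) t) as [d' [Hd' Hlsc]].
    exists (Rmin d d'). split; [apply Rmin_glb_lt; auto|]. intros t' Ht'.
    pose proof (Rmin_l d d'). pose proof (Rmin_r d d').
    unfold interval_weight in *; simpl.
    specialize (IH t' ltac:(lra)). specialize (Hlsc t' ltac:(lra)).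
    pose proof (Rmult_le_compat_l _ _ _ (Hc N) Hlsc). lra.
Qed.

Lemma interval_weight_gt_open N th : open_set (fun t => th < interval_weight N t).
Proof.
  intros t Ht. destruct (interval_weight_lsc N t) as [d [Hd Hlsc]].
  exists (mkposreal d Hd). intros t' Ht'. specialize (Hlsc t' Ht'). lra.
Qed.

Lemma interval_weight_grid p q th N M : p < q -> (1 <= M)%nat ->
  (forall t, p <= t <= q -> th < interval_weight N t) ->
  INR M * th <= INR M / (q - p) * rsum N (fun k => c k * (b k - a k)) + rsum N c.
Proof.
  intros Hpq HM Hcov.
  assert (HMp : 0 < INR M) by (apply lt_0_INR; lia).
  set (h := (q - p) / INR M).
  assert (Hh : 0 < h) by (apply Rdiv_lt_0_compat; lra).
  set (t := fun j => p + (INR j + /2) * h).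
  assert (Ht : forall j, (j < M)%nat -> p <= t j <= q).
  { intros j Hj. assert (INR j + 1 <= INR M) by (rewrite <- S_INR; apply le_INR; lia).
    assert (0 <= INR j) by apply pos_INR.
    assert (h * INR M = q - p) by (unfold h; field; lra).
    unfold t; split; nra. }
  apply Rle_trans with (rsum M (fun j => interval_weight N (t j))).
  { rewrite <- rsum_const. apply rsum_le; intros j Hj. left; apply Hcov; auto. }
  unfold interval_weight. rewrite rsum_exchange.
  apply Rle_trans with (rsum N (fun k => c k * ((b k - a k) / h + 1))).
  { apply rsum_le; intros k _. rewrite rsum_mull. apply Rmult_le_compat_l; auto.
    apply rsum_indic_grid_le; auto. }
  right. rewrite <- rsum_mull, <- rsum_add. apply rsum_ext; intros k _.
  unfold h; field; lra.
Qed.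

(* Heine-Borel makes a single partial sum exceed [th] on all of [p, q]; averaging it over [M] grid
   midpoints and letting [M] grow gives the bound. *)
Lemma interval_len_le_weighted_cover p q th s : p < q ->
  (forall t, p <= t <= q -> exists N, th < interval_weight N t) ->
  (forall N, rsum N (fun k => c k * (b k - a k)) <= s) ->
  th * (q - p) <= s.
Proof.
  intros Hpq Hcov Hs.
  assert (Hmono : forall N N' t, (N <= N')%nat ->
            th < interval_weight N t -> th < interval_weight N' t).
  { intros N N' t HNN' Ht. pose proof (interval_weight_le_len N N' t HNN'). lra. }
  destruct (increasing_open_cover_segment _ p q Hmono (fun N => interval_weight_gt_open N th) Hcov)
    as [N HN].
  enough (Hth : th <= s / (q - p)) by
    (apply Rmult_le_compat_r with (r := q - p) in Hth; [|lra];
     replace (s / (q - p) * (q - p)) with s in Hth by (field; lra); lra).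
  apply Rle_of_linear_bound with (rsum N c). intros M HM.
  eapply Rle_trans; [apply (interval_weight_grid p q th N M); auto|].
  apply Rplus_le_compat_r. set (L := rsum N (fun k => c k * (b k - a k))).
  replace (INR M / (q - p) * L) with (INR M * (L / (q - p))) by (field; lra).
  apply Rmult_le_compat_l; [apply pos_INR|].
  apply Rmult_le_compat_r; [left; apply Rinv_0_lt_compat; lra|apply Hs].
Qed.

End IntervalCover.

Lemma box_vol_ge0 n a b : (forall i, a i <= b i) -> 0 <= box_vol n a b.
Proof. intros Hab; apply rprod_ge0; intros i _; specialize (Hab i); lra. Qed.

Definition box_weight n (a b : nat -> nat -> R) (w : nat -> R) N x :=
  rsum N (fun k => w k * indic (forall i, (i < n)%nat -> a k i < x i < b k i)).

Lemma indic_box_extend n (a b y : nat -> R) t :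
  indic (forall i, (i < S n)%nat -> a i < (if Nat.eq_dec i n then t else y i) < b i)
  = indic (a n < t < b n) * indic (forall i, (i < n)%nat -> a i < y i < b i).
Proof.
  rewrite <- indic_and. apply indic_iff. split.
  - intros H. split.
    + specialize (H n ltac:(lia)). destruct Nat.eq_dec; [auto|congruence].
    + intros i Hi. specialize (H i ltac:(lia)). destruct Nat.eq_dec; [lia|auto].
  - intros [Ht Hy] i Hi. destruct Nat.eq_dec; [subst; auto|apply Hy; lia].
Qed.

(* Induction on the dimension: for each value t of the last coordinate, the boxes whose last
   side contains t form a weighted cover of the slice, to which the induction hypothesis
   applies; the one-dimensional lemma then integrates over t. *)
Lemma box_vol_le_weighted_cover n : forall a b w p q th s,
  (forall k i, a k i <= b k i) -> (forall k, 0 <= w k) -> (forall i, p i < q i) ->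
  (forall x, (forall i, (i < n)%nat -> p i <= x i <= q i) ->
     exists N, th < box_weight n a b w N x) ->
  (forall N, rsum N (fun k => w k * box_vol n (a k) (b k)) <= s) ->
  th * box_vol n p q <= s.
Proof.
  induction n as [|n IH]; intros a b w p q th s Hab Hw Hpq Hcov Hs.
  - destruct (Hcov (fun _ => 0)) as [N HN]; [intros; lia|].
    specialize (Hs N). unfold box_weight, box_vol in *; simpl in *.
    rewrite (rsum_ext N _ (fun k => w k * 1)) in HN; [lra|].
    intros k _. rewrite indic_true; auto. intros; lia.
  - set (V := box_vol n p q). change (box_vol (S n) p q) with (V * (q n - p n)).
    pose proof (Hpq n) as Hpqn.
    apply Rle_plus_epsilon. intros e He.
    set (g := e / (q n - p n)).
    assert (Hg : 0 < g) by (apply Rdiv_lt_0_compat; lra).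
    assert (Hslice : (th * V - g) * (q n - p n) <= s).
    { apply (interval_len_le_weighted_cover (fun k => a k n) (fun k => b k n)
               (fun k => w k * box_vol n (a k) (b k))); auto.
      - intros k; apply Rmult_le_pos; auto; apply box_vol_ge0; auto.
      - intros t Ht. apply NNPP; intro Hno.
        enough (th * V <= th * V - g) by lra.
        apply (IH a b (fun k => w k * indic (a k n < t < b k n)) p q th (th * V - g)); auto.
        + intros k; apply Rmult_le_pos; auto; apply indic_bounds.
        + intros y Hy.
          destruct (Hcov (fun i => if Nat.eq_dec i n then t else y i)) as [N HN].
          { intros i Hi. destruct Nat.eq_dec; [subst; auto|apply Hy; lia]. }
          exists N. eapply Rlt_le_trans; [exact HN|]. right.
          apply rsum_ext; intros k _. rewrite indic_box_extend; ring.
        + intros N. apply Rnot_lt_le; intro Hlt; apply Hno; exists N.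
          eapply Rlt_le_trans; [exact Hlt|]. right.
          apply rsum_ext; intros; ring.
      - intros N. eapply Rle_trans; [|apply (Hs N)]. right.
        apply rsum_ext; intros; unfold box_vol; simpl; ring. }
    replace ((th * V - g) * (q n - p n)) with (th * (V * (q n - p n)) - e) in Hslice
      by (unfold g; field; lra).
    lra.
Qed.

Lemma rprod_shift_le n l : (forall i, 0 <= l i) ->
  exists K, 0 <= K /\ forall d, 0 <= d <= 1 -> rprod n (fun i => l i + d) <= rprod n l + d * K.
Proof.
  intros Hl; induction n as [|n [K [HK IH]]].
  - exists 0. split; [lra|]. intros; simpl; lra.
  - set (P := rprod n l). assert (HP : 0 <= P) by (apply rprod_ge0; auto).
    pose proof (Hl n) as Hln.
    exists (P + K * (l n + 1)). split; [nra|].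
    intros d Hd. simpl. fold P. specialize (IH d Hd). fold P in IH.
    assert (0 <= rprod n (fun i => l i + d)) by (apply rprod_ge0; intros i _; pose proof (Hl i); lra).
    assert (rprod n (fun i => l i + d) * (l n + d) <= (P + d * K) * (l n + d))
      by (apply Rmult_le_compat_r; lra).
    assert (d * d * K <= d * K) by (apply Rmult_le_compat_r; nra).
    nra.
Qed.

Lemma box_vol_enlarge_le n a b eta : (forall i, a i <= b i) -> 0 < eta ->
  exists d, 0 < d /\ box_vol n (fun i => a i - d) (fun i => b i + d) <= box_vol n a b + eta.
Proof.
  intros Hab Heta.
  destruct (rprod_shift_le n (fun i => b i - a i)) as [K [HK HKd]];
    [intros i; specialize (Hab i); lra|].
  set (d := Rmin (/2) (eta / (2 * (K + 1)))).
  pose proof (Rmin_l (/2) (eta / (2 * (K + 1)))) as Hd2.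
  pose proof (Rmin_r (/2) (eta / (2 * (K + 1)))) as HdK.
  assert (Hd : 0 < d) by (apply Rmin_glb_lt; [lra|apply Rdiv_lt_0_compat; lra]).
  exists d; split; auto.
  unfold box_vol. rewrite (rprod_ext n _ (fun i => (b i - a i) + 2 * d)) by (intros; ring).
  eapply Rle_trans; [apply HKd; fold d in Hd2; lra|].
  apply Rplus_le_compat_l. fold d in HdK.
  apply Rmult_le_compat_r with (r := 2 * (K + 1)) in HdK; [|lra].
  replace (eta / (2 * (K + 1)) * (2 * (K + 1))) with eta in HdK by (field; lra).
  nra.
Qed.

Lemma rsum_inv_pow2 N : rsum N (fun k => / 2 ^ S k) = 1 - / 2 ^ N.
Proof.
  induction N; cbn [rsum]; [simpl; lra|]. rewrite IHN.
  assert (0 < 2 ^ N) by (apply pow_lt; lra). simpl; field; lra.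
Qed.

(* The [k]-th box of the cover is enlarged to an open box at the price of [eta / 2^(k+1)] of
   volume; as [th < 1], the one open box around a point already exceeds the threshold. *)
Lemma scaled_box_vol_le_cover_sum n A p q s th eta : 0 < eta -> th < 1 ->
  (forall i, p i < q i) ->
  (forall x, (forall i, (i < n)%nat -> p i <= x i <= q i) -> A x) ->
  cover_sums n A s -> th * box_vol n p q <= s + eta.
Proof.
  intros Heta Hth Hpq HA [a [b [Hab [Hcov Hsum]]]].
  assert (Hd : forall k, exists d, 0 < d /\
    box_vol n (fun i => a k i - d) (fun i => b k i + d) <= box_vol n (a k) (b k) + eta / 2 ^ S k).
  { intros k. apply box_vol_enlarge_le; auto. apply Rdiv_lt_0_compat; [lra|apply pow_lt; lra]. }
  destruct (choice _ Hd) as [d Hdk].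
  apply (box_vol_le_weighted_cover n (fun k i => a k i - d k) (fun k i => b k i + d k) (fun _ => 1)).
  - intros k i; specialize (Hab k i); specialize (Hdk k); lra.
  - intros; lra.
  - auto.
  - intros x Hx. destruct (Hcov x (HA x Hx)) as [k Hk]. exists (S k).
    unfold box_weight. eapply Rlt_le_trans; [|apply (rsum_ge_term _ _ k)].
    + cbv beta. rewrite indic_true; [lra|].
      intros i Hi; specialize (Hk i Hi); specialize (Hdk k); lra.
    + intros; rewrite Rmult_1_l; apply indic_bounds.
    + lia.
  - intros N. apply Rle_trans with (rsum N (fun k => box_vol n (a k) (b k) + eta * / 2 ^ S k)).
    + apply rsum_le; intros k _. rewrite Rmult_1_l. apply (Hdk k).
    + rewrite rsum_add, rsum_mull, rsum_inv_pow2.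
      pose proof (rsum_le_infinite_sum _ _ (fun k => box_vol_ge0 n _ _ (Hab k)) Hsum N).
      assert (0 < / 2 ^ N) by (apply Rinv_0_lt_compat, pow_lt; lra). nra.
Qed.

Lemma box_vol_le_cover_sum n A p q s : (forall i, p i < q i) ->
  (forall x, (forall i, (i < n)%nat -> p i <= x i <= q i) -> A x) ->
  cover_sums n A s -> box_vol n p q <= s.
Proof.
  intros Hpq HA Hs. set (V := box_vol n p q).
  assert (HV : 0 < V) by (apply rprod_gt0; intros i _; specialize (Hpq i); lra).
  apply Rle_plus_epsilon; intros e He.
  assert (He' : 0 < e / (2 * V)) by (apply Rdiv_lt_0_compat; lra).
  pose proof (scaled_box_vol_le_cover_sum n A p q s (1 - e / (2 * V)) (e / 2)) as Happrox.
  fold V in Happrox.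
  replace ((1 - e / (2 * V)) * V) with (V - e / 2) in Happrox by (field; lra).
  specialize (Happrox ltac:(lra) ltac:(lra) Hpq HA Hs). lra.
Qed.

Lemma cover_sums_ge0 n A s : cover_sums n A s -> 0 <= s.
Proof.
  intros [a [b [Hab [_ Hs]]]].
  exact (rsum_le_infinite_sum _ _ (fun k => box_vol_ge0 n _ _ (Hab k)) Hs 0).
Qed.

Lemma lebesgue_measure_exists n A s0 : cover_sums n A s0 -> exists m, lebesgue_measure_is n A m.
Proof.
  intros Hs0.
  destruct (completeness (fun m' => forall s, cover_sums n A s -> m' <= s)) as [m [Hub Hlub]].
  - exists s0. intros m' Hm'; apply Hm'; auto.
  - exists 0. intros s Hs; exact (cover_sums_ge0 n A s Hs).
  - exists m; split.
    + intros s Hs. apply Hlub. intros m' Hm'; apply Hm'; auto.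
    + intros m' Hm'. apply Hub; auto.
Qed.

(* The cover consists of the box itself followed by degenerate boxes, which have volume [0]
   only because [n >= 1]. *)
Lemma cover_sums_box n A p q : (1 <= n)%nat -> (forall i, p i <= q i) ->
  (forall X, A X -> forall i, (i < n)%nat -> p i <= X i <= q i) ->
  cover_sums n A (box_vol n p q).
Proof.
  intros Hn Hpq HA.
  set (a := fun k => if Nat.eq_dec k 0 then p else fun _ => 0).
  set (b := fun k => if Nat.eq_dec k 0 then q else fun _ => 0).
  assert (Hsum : forall N, sum_f_R0 (fun k => box_vol n (a k) (b k)) N = box_vol n p q).
  { induction N as [|N IH]; simpl; [reflexivity|]. rewrite IH.
    unfold a, b; destruct (Nat.eq_dec (S N) 0); [lia|].
    unfold box_vol; destruct n as [|n]; [lia|]. simpl; ring. }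
  exists a, b. split; [|split].
  - intros k i; unfold a, b; destruct Nat.eq_dec; [apply Hpq|lra].
  - intros X HX; exists 0%nat; unfold a, b; destruct (Nat.eq_dec 0 0); [|lia]. apply HA; auto.
  - intros e He; exists 0%nat; intros N _. rewrite Hsum. unfold Rdist.
    rewrite Rminus_diag, Rabs_R0; lra.
Qed.

Lemma lebesgue_measure_ge_box n A m p q : lebesgue_measure_is n A m ->
  (forall i, p i < q i) ->
  (forall x, (forall i, (i < n)%nat -> p i <= x i <= q i) -> A x) ->
  box_vol n p q <= m.
Proof.
  intros [_ Hm] Hpq HA. apply Hm. intros s Hs. apply (box_vol_le_cover_sum n A); auto.
Qed.

Lemma infinite_sum_mulr f g s c :
  (forall k, g k = f k * c) -> infinite_sum f s -> infinite_sum g (s * c).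
Proof.
  intros Hg Hs.
  assert (Hc : Un_cv (fun _ => c) c).
  { intros e He; exists 0%nat; intros; unfold Rdist; rewrite Rminus_diag, Rabs_R0; lra. }
  intros e He. destruct (CV_mult (sum_f_R0 f) _ _ _ Hs Hc e He) as [N HN].
  exists N; intros m Hm. rewrite (sum_eq g (fun k => f k * c)) by auto.
  rewrite <- scal_sum, Rmult_comm. apply HN; auto.
Qed.

Lemma cover_sums_homothety n A B Z c s : 0 < c ->
  (forall X, B X -> A (fun i => Z i + c * (X i - Z i))) ->
  cover_sums n A s -> cover_sums n B (s * (/ c) ^ n).
Proof.
  intros Hc HBA [a [b [Hab [Hcov Hs]]]].
  assert (Hic : 0 < / c) by (apply Rinv_0_lt_compat; lra).
  exists (fun k i => Z i + (a k i - Z i) * / c), (fun k i => Z i + (b k i - Z i) * / c).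
  split; [|split].
  - intros k i. specialize (Hab k i). apply Rplus_le_compat_l, Rmult_le_compat_r; lra.
  - intros X HX. destruct (Hcov _ (HBA X HX)) as [k Hk]. exists k. intros i Hi.
    specialize (Hk i Hi).
    replace (X i) with (Z i + (c * (X i - Z i)) * / c) by (field; lra).
    split; apply Rplus_le_compat_l, Rmult_le_compat_r; lra.
  - apply (infinite_sum_mulr (fun k => box_vol n (a k) (b k))); [|exact Hs].
    intros k. unfold box_vol. rewrite <- rprod_mulr. apply rprod_ext; intros; ring.
Qed.

Lemma lebesgue_measure_homothety_le n A B Z c mA mB : 0 < c ->
  (forall X, B X -> A (fun i => Z i + c * (X i - Z i))) ->
  lebesgue_measure_is n A mA -> lebesgue_measure_is n B mB -> c ^ n * mB <= mA.
Proof.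
  intros Hc HBA [_ HmA] [HmB _]. apply HmA. intros s Hs.
  pose proof (HmB _ (cover_sums_homothety n A B Z c s Hc HBA Hs)) as HmBs.
  assert (Hcn : c ^ n * (/ c) ^ n = 1) by (rewrite <- Rpow_mult_distr, Rinv_r, pow1; lra).
  assert (0 < c ^ n) by (apply pow_lt; lra).
  apply Rmult_le_compat_l with (r := c ^ n) in HmBs; [|lra].
  replace (c ^ n * (s * (/ c) ^ n)) with (s * (c ^ n * (/ c) ^ n)) in HmBs by ring.
  rewrite Hcn, Rmult_1_r in HmBs. exact HmBs.
Qed.

Definition sq_dist n (X Z : nat -> R) := rsum n (fun k => (X k - Z k) ^ 2).

Lemma sq_dist_ge0 n X Z : 0 <= sq_dist n X Z.
Proof. apply rsum_ge0; intros; apply pow2_ge_0. Qed.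

Lemma dist_n_le_iff n X Z c : 0 <= c -> (dist_n n X Z <= c <-> sq_dist n X Z <= c ^ 2).
Proof.
  intros Hc. unfold dist_n. fold (sq_dist n X Z). pose proof (sq_dist_ge0 n X Z) as HQ.
  split; intros H.
  - pose proof (sqrt_sqrt _ HQ). pose proof (sqrt_pos (sq_dist n X Z)). nra.
  - rewrite <- (sqrt_pow2 c Hc). apply sqrt_le_1_alt; auto.
Qed.

Lemma dist_n_homothety n X Z c : 0 <= c ->
  dist_n n (fun i => Z i + c * (X i - Z i)) Z = c * dist_n n X Z.
Proof.
  intros Hc. unfold dist_n.
  rewrite (rsum_ext n _ (fun k => c ^ 2 * (X k - Z k) ^ 2)) by (intros; ring).
  rewrite rsum_mull, sqrt_mult_alt, sqrt_pow2; auto. apply pow2_ge_0.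
Qed.

Lemma ball_sub_box n X Z r : dist_n n X Z <= r ->
  forall i, (i < n)%nat -> Z i - r <= X i <= Z i + r.
Proof.
  intros Hd i Hi.
  assert (Hr : 0 <= r) by (eapply Rle_trans; [apply sqrt_pos|exact Hd]).
  apply dist_n_le_iff in Hd; auto.
  assert ((X i - Z i) ^ 2 <= sq_dist n X Z)
    by (apply (rsum_ge_term n (fun k => (X k - Z k) ^ 2)); auto; intros; apply pow2_ge_0).
  split; nra.
Qed.

Lemma box_sub_ball n X Z r : (1 <= n)%nat -> 0 <= r ->
  (forall i, (i < n)%nat -> Z i - r / INR n <= X i <= Z i + r / INR n) -> dist_n n X Z <= r.
Proof.
  intros Hn Hr HX. apply dist_n_le_iff; auto.
  assert (HnR : 1 <= INR n) by (apply (le_INR 1); lia).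
  apply Rle_trans with (rsum n (fun _ => (r / INR n) ^ 2)).
  - apply rsum_le; intros k Hk. specialize (HX k Hk).
    assert (0 <= r / INR n) by (apply Rmult_le_pos; [lra|left; apply Rinv_0_lt_compat; lra]).
    nra.
  - rewrite rsum_const.
    replace (INR n * (r / INR n) ^ 2) with (r ^ 2 / INR n) by (field; lra).
    apply Rmult_le_reg_r with (INR n); [lra|].
    unfold Rdiv; rewrite Rmult_assoc, Rinv_l by lra. nra.
Qed.

Lemma lebesgue_measure_exists_sub_ball n A Z r : (1 <= n)%nat -> 0 <= r ->
  (forall X, A X -> dist_n n X Z <= r) -> exists m, lebesgue_measure_is n A m.
Proof.
  intros Hn Hr HA.
  apply (lebesgue_measure_exists n A (box_vol n (fun i => Z i - r) (fun i => Z i + r))).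
  apply cover_sums_box; auto; [intros; lra|].
  intros X HX. apply ball_sub_box, HA, HX.
Qed.

Lemma lebesgue_measure_gt0_of_ball n A Z r m : (1 <= n)%nat -> 0 < r ->
  (forall X, dist_n n X Z <= r -> A X) -> lebesgue_measure_is n A m -> 0 < m.
Proof.
  intros Hn Hr HA Hm.
  assert (HnR : 1 <= INR n) by (apply (le_INR 1); lia).
  assert (Hh : 0 < r / INR n) by (apply Rdiv_lt_0_compat; lra).
  apply Rlt_le_trans with (box_vol n (fun i => Z i - r / INR n) (fun i => Z i + r / INR n)).
  - apply rprod_gt0; intros; lra.
  - apply (lebesgue_measure_ge_box n A); auto; [intros; lra|].
    intros X HX. apply HA, box_sub_ball; auto; lra.
Qed.

Lemma one_sub_exp_opp_le w : 1 - exp (- w) <= w.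
Proof. pose proof (exp_ineq1_le (- w)); lra. Qed.

Lemma mul_exp_opp_le w : w * exp (- w) <= 1 - exp (- w).
Proof.
  pose proof (exp_ineq1_le w). pose proof (exp_pos (- w)).
  assert (exp w * exp (- w) = 1) by (rewrite <- exp_plus, Rplus_opp_r, exp_0; auto).
  nra.
Qed.

Lemma one_sub_exp_opp_ge0 w : 0 <= w -> 0 <= 1 - exp (- w).
Proof. intros Hw. pose proof (mul_exp_opp_le w). pose proof (exp_pos (- w)). nra. Qed.

Definition saf_gap n (Z : nat -> R) lam (X : nat -> R) :=
  rsum n (fun k => 1 - exp (- (lam * (X k - Z k)) ^ 2)).

Lemma saf_net_gap n Z lam X : saf_net n Z lam X = exp (- saf_gap n Z lam X ^ 2).
Proof.
  unfold saf_net, saf_gap. cbv zeta. f_equal.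
  rewrite rsum_sub, rsum_const. ring.
Qed.

Lemma saf_gap_ge0 n Z lam X : 0 <= saf_gap n Z lam X.
Proof.
  apply rsum_ge0; intros k _. apply one_sub_exp_opp_ge0, pow2_ge_0.
Qed.

Lemma saf_net_ge_exp_iff n Z lam X d : 0 <= d ->
  (saf_net n Z lam X >= exp (- d ^ 2) <-> saf_gap n Z lam X <= d).
Proof.
  intros Hd. rewrite saf_net_gap. pose proof (saf_gap_ge0 n Z lam X).
  set (g := saf_gap n Z lam X) in *. split; intros H'.
  - apply Rnot_lt_le; intros Hlt.
    assert (Hsq : - g ^ 2 < - d ^ 2) by nra. pose proof (exp_increasing _ _ Hsq). lra.
  - destruct (Req_dec g d) as [->|Hne]; [lra|].
    left. apply exp_increasing. nra.
Qed.

Lemma saf_gap_le_sq_dist n Z lam X : saf_gap n Z lam X <= lam ^ 2 * sq_dist n X Z.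
Proof.
  unfold saf_gap, sq_dist. rewrite <- rsum_mull. apply rsum_le; intros k _.
  eapply Rle_trans; [apply one_sub_exp_opp_le|]. right; ring.
Qed.

(* Once the gap is at most [d], every summand is, so each [exp (- w_k)] is at least [1 - d]. *)
Lemma sq_dist_le_saf_gap n Z lam X d : saf_gap n Z lam X <= d ->
  (1 - d) * (lam ^ 2 * sq_dist n X Z) <= saf_gap n Z lam X.
Proof.
  intros Hgap. unfold sq_dist. rewrite <- !rsum_mull.
  apply rsum_le; intros k Hk. set (w := (lam * (X k - Z k)) ^ 2).
  assert (Hw : 0 <= w) by apply pow2_ge_0.
  assert (1 - exp (- w) <= d).
  { eapply Rle_trans; [|exact Hgap].
    apply (rsum_ge_term n (fun k => 1 - exp (- (lam * (X k - Z k)) ^ 2))); auto.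
    intros j _. apply one_sub_exp_opp_ge0, pow2_ge_0. }
  pose proof (mul_exp_opp_le w).
  replace ((1 - d) * (lam ^ 2 * (X k - Z k) ^ 2)) with ((1 - d) * w) by (unfold w; ring).
  nra.
Qed.

(* The parameters make [lam^2 (rho r)^2 = 1 - rho^2]: the accepted region then lies between
   the balls of radii [rho r] and [r] around [Z]. *)
Definition saf_lam r rho := sqrt (1 - rho ^ 2) / (rho * r).
Definition saf_tau rho := exp (- (1 - rho ^ 2) ^ 2).

Lemma saf_lam_sq r rho : 0 < r -> 0 < rho < 1 ->
  saf_lam r rho ^ 2 * (rho * r) ^ 2 = 1 - rho ^ 2.
Proof.
  intros Hr Hrho. unfold saf_lam.
  transitivity (sqrt (1 - rho ^ 2) * sqrt (1 - rho ^ 2)); [field; nra|apply sqrt_sqrt; nra].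
Qed.

Lemma saf_lam_gt0 r rho : 0 < r -> 0 < rho < 1 -> 0 < saf_lam r rho.
Proof. intros Hr Hrho. apply Rdiv_lt_0_compat; [apply sqrt_lt_R0|]; nra. Qed.

Lemma saf_tau_bounds rho : 0 < rho < 1 -> 0 < saf_tau rho < 1.
Proof.
  intros Hrho. split; [apply exp_pos|]. unfold saf_tau. rewrite <- exp_0 at 2.
  apply exp_increasing. assert (0 < (1 - rho ^ 2) ^ 2) by (apply pow_lt; nra). lra.
Qed.

Lemma saf_level_set_sub_ball n Z r rho X : 0 < r -> 0 < rho < 1 ->
  saf_net n Z (saf_lam r rho) X >= saf_tau rho -> dist_n n X Z <= r.
Proof.
  intros Hr Hrho Hnet. apply dist_n_le_iff; [lra|].
  apply saf_net_ge_exp_iff in Hnet; [|nra].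
  pose proof (sq_dist_le_saf_gap _ _ _ _ _ Hnet) as Hlow.
  pose proof (saf_lam_sq r rho Hr Hrho) as Hlam.
  set (k := saf_lam r rho ^ 2 * rho ^ 2).
  assert (Hk : 0 < k) by (unfold k; pose proof (saf_lam_gt0 r rho Hr Hrho); nra).
  apply Rmult_le_reg_l with k; auto. unfold k. nra.
Qed.

Lemma ball_sub_saf_level_set n Z r rho X : 0 < r -> 0 < rho < 1 ->
  dist_n n X Z <= rho * r -> saf_net n Z (saf_lam r rho) X >= saf_tau rho.
Proof.
  intros Hr Hrho Hd. apply dist_n_le_iff in Hd; [|nra].
  apply saf_net_ge_exp_iff; [nra|].
  eapply Rle_trans; [apply saf_gap_le_sq_dist|].
  rewrite <- (saf_lam_sq r rho Hr Hrho). apply Rmult_le_compat_l; [apply pow2_ge_0|auto].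
Qed.

Theorem lemma1 (n : nat) (Z : nat -> R) (r eps : R) :
  (1 <= n)%nat -> 0 < r -> 0 < eps < 1 ->
  exists lam tau : R, 0 < lam /\ 0 < tau < 1 /\
    exists mI mU : R,
      lebesgue_measure_is n
        (fun X => dist_n n X Z <= r /\ saf_net n Z lam X >= tau) mI /\
      lebesgue_measure_is n
        (fun X => dist_n n X Z <= r \/ saf_net n Z lam X >= tau) mU /\
      0 < mU /\
      mI / mU >= 1 - eps.
Proof.
  intros Hn Hr Heps.
  destruct (one_sub_div_pow_ge n eps Hn Heps) as [Hrho Hrho_n].
  set (rho := 1 - eps / INR n) in *.
  exists (saf_lam r rho), (saf_tau rho).
  split; [apply saf_lam_gt0; auto|]. split; [apply saf_tau_bounds; auto|].
  set (I := fun X => dist_n n X Z <= r /\ saf_net n Z (saf_lam r rho) X >= saf_tau rho).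
  set (U := fun X => dist_n n X Z <= r \/ saf_net n Z (saf_lam r rho) X >= saf_tau rho).
  assert (HU : forall X, U X -> dist_n n X Z <= r).
  { intros X [HX|HX]; [auto|apply (saf_level_set_sub_ball n Z r rho); auto]. }
  destruct (lebesgue_measure_exists_sub_ball n I Z r) as [mI HmI]; [auto|lra|intros X []; auto|].
  destruct (lebesgue_measure_exists_sub_ball n U Z r) as [mU HmU]; [auto|lra|auto|].
  exists mI, mU. split; [exact HmI|]. split; [exact HmU|].
  assert (HmU_pos : 0 < mU)
    by (apply (lebesgue_measure_gt0_of_ball n U Z r); auto; intros X HX; left; auto).
  assert (Hhom : rho ^ n * mU <= mI).
  { apply (lebesgue_measure_homothety_le n I U Z rho); auto; [lra|]. intros X HX.
    assert (Hrho_r : dist_n n (fun i => Z i + rho * (X i - Z i)) Z <= rho * r)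
      by (rewrite dist_n_homothety by lra; apply Rmult_le_compat_l; [lra|auto]).
    split; [nra|apply ball_sub_saf_level_set; auto]. }
  split; [exact HmU_pos|].
  apply Rle_ge, Rmult_le_reg_r with mU; auto.
  unfold Rdiv; rewrite Rmult_assoc, Rinv_l by lra. nra.
Qed.
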